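(* Let $\mathcal{X}$ be a countable set and $\pi$ a probability distribution on $\mathcal{X}$. For $i=1,\dots,n$ let $S_i:\mathcal{X}\to\mathcal{X}$ be an involution ($S_i\circ S_i=\mathrm{id}$) which is $\pi$-invariant ($\pi(S_i(A))=\pi(A)$ for all $A\subset\mathcal{X}$), let $P_i$ be a Markov kernel on $\mathcal{X}$, and let $\omega=(\omega_1,\dots,\omega_n):\mathcal{X}\to\Delta^{n-1}$, where $\Delta^{n-1}=\{y\in\mathbb{R}^n: y_i\ge 0,\ \sum_{i=1}^n y_i=1\}$. Define the Markov kernel $\mathcal{K}(x,\cdot)=\sum_{i=1}^n\omega_i(x)P_i(x,\cdot)$. Suppose $\mathcal{K}$ satisfies the mixed skewed balance condition with respect to $\pi$, i.e. for all $x,x'\in\mathcal{X}$ and all $i\in\{1,\dots,n\}$, $$\omega_i(x)\,\pi(x)\,P_i(x,x')=\omega_i(x')\,\pi(x')\,P_i\big(S_i(x'),S_i(x)\big).$$ Then $\pi$ is invariant under $\mathcal{K}$, i.e. $\sum_{x\in\mathcal{X}}\pi(x)\mathcal{K}(x,x')=\pi(x')$ for all $x'\in\mathcal{X}$. *)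

From HB Require Import structures.
From mathcomp Require Import all_boot all_order all_algebra.
From mathcomp Require Import all_classical all_reals.
From mathcomp Require Import ereal esum.
Set Implicit Arguments. Unset Strict Implicit. Unset Printing Implicit Defensive.
Import Order.TTheory GRing.Theory Num.Theory.
Local Open Scope classical_set_scope.
Local Open Scope ring_scope.

Definition pmass (R : realType) (T : countType) (pi : T -> R) (A : set T) : \bar R :=
  \esum_(x in A) (pi x)%:E.

Definition is_prob (R : realType) (T : countType) (pi : T -> R) : Prop :=
  (forall x, 0 <= pi x) /\ pmass pi setT = 1%E.

Definition is_markov_kernel (R : realType) (T : countType) (P : T -> T -> R) : Prop :=
  forall x, is_prob (P x).

Definition in_simplex (R : realType) (n : nat) (y : 'I_n -> R) : Prop :=
  (forall i, 0 <= y i) /\ \sum_(i < n) y i = 1.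

Definition mix_kernel (R : realType) (T : countType) (n : nat)
  (omega : T -> 'I_n -> R) (P : 'I_n -> T -> T -> R) : T -> T -> R :=
  fun x x' => \sum_(i < n) omega x i * P i x x'.

From HB Require Import structures.
From mathcomp Require Import all_boot all_order all_algebra.
From mathcomp Require Import all_classical all_reals.
From mathcomp Require Import ereal esum.
Import Order.TTheory GRing.Theory Num.Theory.
Local Open Scope classical_set_scope.
Local Open Scope ring_scope.

(* Split the flux into x' along the mixture.  For each component i, skewed
   balance turns the i-th flux into omega_i(x') pi(x') times
   sum_x P_i(S_i x', S_i x), which is the total mass 1 of P_i(S_i x', .)
   because x |-> S_i x is a bijection.  Summing omega_i(x') over i gives
   pi(x'). *)

Lemma esumZl (R : realType) (T : choiceType) (A : set T) (a : T -> \bar R) (r : R) :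
  0 <= r -> (forall x, (0 <= a x)%E) ->
  (\esum_(x in A) (r%:E * a x) = r%:E * \esum_(x in A) a x)%E.
Proof.
move=> r0 a0; rewrite /esum -ereal_supZl //; last first.
  by apply/set0P; exists 0%E; exists set0; [exact: fsets_set0 | rewrite fsbig_set0].
rewrite image_comp; congr ereal_sup; apply: eq_imagel => B [Bfin BA] /=.
by rewrite !fsbig_finite // ge0_sume_distrr.
Qed.

Lemma pmassT_bijective (R : realType) (T : countType) (p : T -> R) (f : T -> T) :
  bijective f -> (\esum_(x in setT) (p (f x))%:E)%E = pmass p setT.
Proof.
move=> f_bij; rewrite /pmass.
by rewrite -(@reindex_esum _ _ _ setT setT f (fun x => (p x)%:E)) // setTT_bijective.
Qed.

Lemma esum_mix_kernel (R : realType) (T : countType) (n : nat) (pi : T -> R)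
    (omega : T -> 'I_n -> R) (P : 'I_n -> T -> T -> R) (x' : T) :
  (forall x, 0 <= pi x) -> (forall x i, 0 <= omega x i) ->
  (forall i x, 0 <= P i x x') ->
  (\esum_(x in setT) (pi x * mix_kernel omega P x x')%:E =
   \sum_(i < n) \esum_(x in setT) (omega x i * pi x * P i x x')%:E)%E.
Proof.
move=> pi0 omega0 P0; rewrite -esum_sum; last first.
  by move=> x i _ _; rewrite lee_fin !mulr_ge0.
apply: eq_esum => x _; rewrite /mix_kernel sumEFin mulr_sumr.
by congr (_%:E); apply: eq_bigr => i _; rewrite mulrA (mulrC (pi x)).
Qed.

Section SkewedBalance.
Context {R : realType} {T : countType} {w pi : T -> R} {Q : T -> T -> R} {s : T -> T}.
Hypotheses (pi0 : forall x, 0 <= pi x) (w0 : forall x, 0 <= w x).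
Hypotheses (Q_kernel : is_markov_kernel Q) (s_invol : involutive s).
Hypothesis skew_balance :
  forall x x', w x * pi x * Q x x' = w x' * pi x' * Q (s x') (s x).

Lemma skew_balance_flux x' :
  (\esum_(x in setT) (w x * pi x * Q x x')%:E = (w x' * pi x')%:E)%E.
Proof.
have [Q0 Q1] := Q_kernel (s x').
under eq_esum do rewrite skew_balance EFinM.
rewrite esumZl ?mulr_ge0 // => [|x]; last by rewrite lee_fin.
by rewrite pmassT_bijective ?Q1 ?mule1 //; exact: inv_bij.
Qed.

End SkewedBalance.

Theorem theorem4p1 (R : realType) (T : countType) (n : nat) (pi : T -> R)
  (S : 'I_n -> T -> T) (P : 'I_n -> T -> T -> R) (omega : T -> 'I_n -> R) :
  is_prob pi ->
  (forall i x, S i (S i x) = x) ->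
  (forall i (A : set T), pmass pi (S i @` A) = pmass pi A) ->
  (forall i, is_markov_kernel (P i)) ->
  (forall x, in_simplex (omega x)) ->
  (forall (x x' : T) (i : 'I_n),
     omega x i * pi x * P i x x' = omega x' i * pi x' * P i (S i x') (S i x)) ->
  forall x' : T,
    (\esum_(x in setT) (pi x * mix_kernel omega P x x')%:E = (pi x')%:E)%E.
Proof.
move=> [pi0 _] S_invol _ P_kernel omega_simplex skew_balance x'.
have omega0 x i : 0 <= omega x i by have [] := omega_simplex x.
have P0 i x y : 0 <= P i x y by have [] := P_kernel i x.
rewrite esum_mix_kernel //.
under eq_bigr => i _ do rewrite (skew_balance_flux pi0 (omega0^~ i) (P_kernel i)
  (S_invol i) (fun x y => skew_balance x y i)).
have [_ omega1] := omega_simplex x'.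
by rewrite sumEFin -mulr_suml omega1 mul1r.
Qed.
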